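(* Let $X_{0-}$ be a real-valued random variable with a bounded density $V_{0-}$, and let $Y^1,Y^2$ be càdlàg stochastic processes on $[0,\infty)$ such that $X_{0-}$ is independent of $(Y^1,Y^2)$. Then for every $t\ge0$, $\left|\mathbb{P}\left(\inf_{0\le s\le t}(X_{0-}+Y^1_s)\le0\right)-\mathbb{P}\left(\inf_{0\le s\le t}(X_{0-}+Y^2_s)\le0\right)\right|\le\|V_{0-}\|_\infty\,\mathbb{E}\left[\sup_{0\le s\le t}|Y^1_s-Y^2_s|\right]$. *)

From HB Require Import structures.
From mathcomp Require Import all_boot all_order all_algebra.
From mathcomp Require Import all_classical all_reals all_analysis.
Set Implicit Arguments. Unset Strict Implicit. Unset Printing Implicit Defensive.
Import Order.TTheory GRing.Theory Num.Theory.
Import numFieldNormedType.Exports.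
Local Open Scope classical_set_scope.
Local Open Scope ring_scope.

Definition cadlag {R : realType} (f : R -> R) : Prop :=
  (forall s : R, 0 <= s -> f x @[x --> at_right s] --> f s) /\
  (forall s : R, 0 < s -> cvg (f x @[x --> at_left s])).

Definition gen_sigma_pair {d} {T : measurableType d} {R : realType}
  (Y1 Y2 : R -> T -> R) : set (set T) :=
  <<s [set E | exists s : R, exists B : set R,
        [/\ 0 <= s, measurable B & (E = Y1 s @^-1` B \/ E = Y2 s @^-1` B)]] >>.

Definition indep_rv_sigma {d} {T : measurableType d} {R : realType}
  (P : probability T R) (X : T -> R) (G : set (set T)) : Prop :=
  forall A B, measurable A -> G B ->
    P (X @^-1` A `&` B) = (P (X @^-1` A) * P B)%E.

(* Write E_k for the event inf_{s <= t} (X + Y^k_s) <= 0 and Z for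
   sup_{s <= t} |Y^1_s - Y^2_s|; by symmetry it suffices to show
   P(E_1 \ E_2) <= M E[Z].  Cut the line into cells ]a_i, a_i + h].  If w is
   in E_1 \ E_2 and X w lies in cell i, then Y^1 dips below -a_i before t
   while Y^2 stays above -(a_i + h); this "dip gap" event D_i depends on the
   paths only, so independence and the density bound give
   P(X in cell i, D_i) <= M h P(D_i).  If w lies in D_i and D_j with i < j,
   then Z w > (j - i - 1) h, so at most Z w / h + 2 of the D_i contain w and
   h sum_i P(D_i) <= E[Z] + 2 h.  Hence P(E_1 \ E_2) <= M (E[Z] + 2 h) for
   every h > 0.  Right continuity reduces all events to countably many
   times, which makes them measurable, and the D_i measurable with respect to
   the paths. *)

From HB Require Import structures.
From mathcomp Require Import all_boot all_order all_algebra.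
From mathcomp Require Import all_classical all_reals all_analysis.
From mathcomp Require Import measurable_realfun lra.
Set Implicit Arguments. Unset Strict Implicit. Unset Printing Implicit Defensive.
Import Order.TTheory GRing.Theory Num.Theory.
Import numFieldNormedType.Exports.
Local Open Scope classical_set_scope.
Local Open Scope ring_scope.

Lemma sum_pred_le_spread {R : realFieldType} (n : nat) (p : pred nat) (h z : R) :
  0 < h -> 0 <= z ->
  (forall i j, p i -> p j -> (i < j)%N -> (j%:R - i%:R - 1) * h < z) ->
  h * \sum_(i < n) (p i)%:R <= z + 2 * h.
Proof.
move=> h0 z0 gap.
rewrite -natr_sum -(big_mkord xpredT (fun i => nat_of_bool (p i))).
rewrite -big_mkcondr /= sum1_count /index_iota subn0 -size_filter.
have [ex|none] := pselect (exists i, p i && (i < n)%N); last first.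
  suff -> : [seq i <- iota 0 n | p i] = [::] by rewrite /= mulr0; lra.
  apply/eqP; rewrite -(negbK (_ == _)) -has_filter; apply/hasP => -[i].
  by rewrite mem_iota add0n => /andP[_ ilt] pi; apply: none; exists i; rewrite pi.
have ub i : p i && (i < n)%N -> (i <= n)%N by case/andP => _ /ltnW.
have [i1 /andP[pi1 _] max1] := ex_maxnP ex ub.
have [i0 /[dup] /max1-le01 /andP[pi0 _] min0] := ex_minnP ex.
have size_le : (size [seq i <- iota 0 n | p i] <= i1.+1 - i0)%N.
  rewrite -(size_iota i0 (i1.+1 - i0)); apply: uniq_leq_size.
    exact/filter_uniq/iota_uniq.
  move=> i; rewrite mem_filter mem_iota add0n => /andP[pi /= ilt].
  have := min0 i; have := max1 i; rewrite mem_iota pi ilt.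
  move=> /(_ isT) hi /(_ isT) lo.
  by rewrite lo subnKC ?ltnS // (leq_trans lo) // (leq_trans hi).
apply: le_trans (_ : h * (i1.+1 - i0)%:R <= _).
  by rewrite ler_pM2l // ler_nat.
move: le01; rewrite leq_eqVlt => /predU1P[->|lt01].
  by rewrite subSnn mulr1; lra.
have := gap _ _ pi0 pi1 lt01.
rewrite natrB ?(leqW (ltnW lt01)) // -natr1; lra.
Qed.
Section path_events.
Context {R : realType}.

Definition hits_below (U : Type) (Y : R -> U -> R) (t c : R) : set U :=
  [set w | exists2 s, `[0, t]%classic s & Y s w < c].

Definition ruin (U : Type) (X : U -> R) (Y : R -> U -> R) (t : R) : set U :=
  [set w | (ereal_inf [set (X w + Y s w)%:E | s in `[0%R, t]%classic] <= 0)%E].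

Definition sup_dist (U : Type) (Y1 Y2 : R -> U -> R) (t : R) (w : U) : \bar R :=
  ereal_sup [set `|Y1 s w - Y2 s w|%:E | s in `[0%R, t]%classic].

Lemma sup_distC (U : Type) (Y1 Y2 : R -> U -> R) t : sup_dist Y1 Y2 t = sup_dist Y2 Y1 t.
Proof.
apply/funext => w; congr ereal_sup; apply/seteqP; split => _ [s st <-];
  by exists s => //; rewrite distrC.
Qed.

Lemma sup_dist_ge0 (U : Type) (Y1 Y2 : R -> U -> R) t w :
  0 <= t -> (0 <= sup_dist Y1 Y2 t w)%E.
Proof.
move=> t0; apply: (@le_trans _ _ `|Y1 0 w - Y2 0 w|%:E); first by rewrite lee_fin.
by apply: ereal_sup_ubound; exists 0; rewrite //= in_itv /= lexx t0.
Qed.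

Lemma right_continuous_lt_rat (f : R -> R) (t c : R) :
  (forall s, 0 <= s -> f x @[x --> at_right s] --> f s) ->
  (exists2 s, `[0, t]%classic s & f s < c) ->
  f t < c \/ exists q : rat, (0 <= (ratr q : R) <= t) && (f (ratr q) < c).
Proof.
move=> fr [s]; rewrite /= in_itv /= => /andP[s0 st] fsc.
have [<-|neq_st] := eqVneq s t; [by left | right].
have lt_st : s < t by rewrite lt_neqAle neq_st st.
have : nbhs_ball s (fun x => s < x -> f x < c).
  by rewrite -nbhs_ballP; exact: cvgr_lt (f s) (fr s s0) c fsc.
move=> [e /= e0 fe].
have [q] : exists q : rat, s < ratr q < Num.min (s + e) t.
  by apply: rat_in_itvoo; rewrite lt_min lt_st ltrDl e0.
rewrite lt_min => /andP[sq /andP[qse qt]].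
exists q; rewrite (le_trans s0 (ltW sq)) (ltW qt) /=; apply: fe => //=.
by rewrite -ball_normE /= ltr0_norm ?subr_lt0 // opprB ltrBlDl.
Qed.

Lemma measurable_ltr_cst d (T : measurableType d) (f : T -> R) c :
  measurable_fun setT f -> measurable [set w | f w < c].
Proof.
move=> mf; have := mf measurableT _ (measurable_itv `]-oo, c[).
by rewrite setTI; congr measurable; apply/seteqP; split => w /=; rewrite in_itv.
Qed.

Lemma measurable_hits_below d (T : measurableType d) (Y : R -> T -> R) t c :
  (forall s, 0 <= s -> measurable_fun setT (Y s)) ->
  (forall w s, 0 <= s -> Y x w @[x --> at_right s] --> Y s w) ->
  0 <= t -> measurable (hits_below Y t c).
Proof.
move=> mY Yr t0.
have -> : hits_below Y t c = [set w | Y t w < c] `|` \bigcup_(q : rat)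
    (if 0 <= (ratr q : R) <= t then [set w | Y (ratr q) w < c] else set0).
  apply/seteqP; split => w.
    move=> /(right_continuous_lt_rat (Yr w)) [|[q /andP[qt Yq]]]; first by left.
    by right; exists q; rewrite ?qt.
  case=> [Yt|[q _]]; first by exists t; rewrite //= in_itv /= t0 lexx.
  by case: ifP => // qt Yq; exists (ratr q); rewrite //= in_itv.
apply: measurableU; first exact/measurable_ltr_cst/mY.
apply: bigcupT_measurable_rat => q; case: ifP => // /andP[q0 _].
exact/measurable_ltr_cst/mY.
Qed.

Lemma ruin_bigcap (U : Type) (X : U -> R) (Y : R -> U -> R) t :
  ruin X Y t = \bigcap_n hits_below (fun s w => X w + Y s w) t n.+1%:R^-1.
Proof.
apply/seteqP; split => w.
  move=> Xw n _; have /ereal_inf_lt[_ [s st <-]] :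
      (ereal_inf [set (X w + Y s w)%:E | s in `[0%R, t]%classic] < n.+1%:R^-1%:E)%E.
    by apply: le_lt_trans Xw _; rewrite lte_fin invr_gt0.
  by rewrite lte_fin; exists s.
move=> Xw; apply/lee_addgt0Pr => e e0; rewrite add0e.
have [n ne] : exists n, n.+1%:R^-1 < e.
  have e0' : 0 <= e^-1 by rewrite invr_ge0 ltW.
  exists (Num.bound e^-1); rewrite invf_plt ?posrE //.
  by apply: lt_trans (archi_boundP e0') _; rewrite ltr_nat.
have [s st Ys] := Xw n I; apply: le_trans (ereal_inf_lbound _) _.
  by exists s.
by rewrite lee_fin ltW // (lt_trans Ys).
Qed.

Lemma measurable_ruin d (T : measurableType d) (X : T -> R) (Y : R -> T -> R) t :
  measurable_fun setT X -> (forall s, 0 <= s -> measurable_fun setT (Y s)) ->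
  (forall w s, 0 <= s -> Y x w @[x --> at_right s] --> Y s w) ->
  0 <= t -> measurable (ruin X Y t).
Proof.
move=> mX mY Yr t0; rewrite ruin_bigcap; apply: bigcapT_measurable => n.
apply: measurable_hits_below => // [s s0|w s s0].
  exact: measurable_funD (mY s s0).
exact: cvgD (cvg_cst _) (Yr w s s0).
Qed.

End path_events.
Section dip_gap.
Context {R : realType} (U : Type) (X : U -> R) (Y1 Y2 : R -> U -> R) (t : R).

Definition dip_gap (a h : R) : set U :=
  hits_below Y1 t (- a) `\` hits_below Y2 t (- (a + h)).

Lemma ruin_hits_below w (x : R) :
  ruin X Y1 t w -> x < X w -> hits_below Y1 t (- x) w.
Proof.
move=> Xw xX; have /ereal_inf_lt[_ [s st <-]] :
    (ereal_inf [set (X w + Y1 s w)%:E | s in `[0%R, t]%classic] < (X w - x)%:E)%E.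
  by apply: le_lt_trans Xw _; rewrite lte_fin subr_gt0.
by rewrite lte_fin => Ys; exists s => //; lra.
Qed.

Lemma hits_below_ruin w (x : R) :
  hits_below Y2 t (- x) w -> X w <= x -> ruin X Y2 t w.
Proof.
move=> [s st Ys] Xx; apply: le_trans (ereal_inf_lbound _) _; first by exists s.
by rewrite lee_fin; lra.
Qed.

Lemma hits_below_sup_dist w (c c' : R) :
  hits_below Y1 t c w -> ~ hits_below Y2 t c' w ->
  ((c' - c)%:E < sup_dist Y1 Y2 t w)%E.
Proof.
move=> [s st Y1s] Y2w; apply: lt_le_trans (ereal_sup_ubound _); last by exists s.
have Y2s : c' <= Y2 s w by rewrite leNgt; apply/negP => Y2s; apply: Y2w; exists s.
rewrite lte_fin distrC (lt_le_trans _ (ler_norm _)) //; lra.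
Qed.

Lemma itv_cell (b h x : R) (n : nat) : 0 < h -> b < x <= b + n%:R * h ->
  exists2 i, (i < n)%N & b + i%:R * h < x <= b + i%:R * h + h.
Proof.
move=> h0; elim: n => [|n IH] /andP[bx xn].
  by move: (lt_le_trans bx xn); rewrite mul0r addr0 ltxx.
have [xle|xgt] := leP x (b + n%:R * h).
  by have [i ilt hi] := IH ltac:(by rewrite bx xle); exists i => //; rewrite ltnS ltnW.
by exists n => //; rewrite xgt /=; move: xn; rewrite -natr1 mulrDl mul1r addrA.
Qed.

Lemma ruin_diff_sub_cells (b h : R) (n : nat) : 0 < h ->
  (ruin X Y1 t `\` ruin X Y2 t) `&` X @^-1` `]b, (b + n%:R * h)%R]%classic `<=`
  \bigcup_(i < n) (X @^-1` `]b + i%:R * h, (b + i%:R * h + h)%R]%classic `&`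
                    dip_gap (b + i%:R * h) h).
Proof.
move=> h0 w [[ruin1 ruin2]]; rewrite /= in_itv /= => /(itv_cell h0)[i ilt].
move=> /[dup] /andP[lo hi] Xi; exists i => //; split; first by rewrite /= in_itv.
split; first exact: ruin_hits_below.
by move=> /hits_below_ruin/(_ hi).
Qed.

Lemma sum_dip_gap_le (b h : R) (n : nat) w : 0 < h -> 0 <= t ->
  ((h * \sum_(i < n) \1_(dip_gap (b + i%:R * h) h) w)%:E
     <= sup_dist Y1 Y2 t w + (2 * h)%:E)%E.
Proof.
move=> h0 t0; have := sup_dist_ge0 Y1 Y2 w t0.
case Zw: (sup_dist Y1 Y2 t w) => [z| |] // z0; last by rewrite leey.
rewrite -EFinD lee_fin; under eq_bigr do rewrite indicE.
apply: (@sum_pred_le_spread _ _ (fun i => w \in dip_gap (b + i%:R * h) h)) => // i j.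
rewrite !inE => -[_ Y2i] [Y1j _] ij; rewrite -lte_fin -Zw.
apply: le_lt_trans (hits_below_sup_dist Y1j Y2i); rewrite lee_fin; lra.
Qed.

End dip_gap.
Section integral_bounds.
Context d (T : measurableType d) (R : realType).
Local Open Scope ereal_scope.

Lemma ge0_le_integral_nonmeasurable (mu : {measure set T -> \bar R})
    (f1 f2 : T -> \bar R) :
  (forall x, 0 <= f1 x) -> (forall x, f1 x <= f2 x) ->
  \int[mu]_x f1 x <= \int[mu]_x f2 x.
Proof.
move=> f10 f12; have f20 x := le_trans (f10 x) (f12 x).
rewrite !ge0_integralTE //; apply: ereal_sup_le => _ [h hf1 <-].
by exists h => // x; exact: le_trans (hf1 x) (f12 x).
Qed.

Lemma ge0_le_integral_addr_nonmeasurable (P : probability T R)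
    (f g : T -> \bar R) (c : R) :
  measurable_fun setT f -> (forall x, 0 <= f x) -> (forall x, 0 <= g x) ->
  (0 <= c)%R -> (forall x, f x <= g x + c%:E) ->
  \int[P]_x f x <= \int[P]_x g x + c%:E.
Proof.
move=> mf f0 g0 c0 fgc.
pose f' x := maxe (f x - c%:E) 0.
have mf' : measurable_fun setT f'.
  by apply: measurable_maxe => //; exact: emeasurable_funB.
have f'0 x : 0 <= f' x by rewrite /f' le_max lexx orbT.
have fcf' x : f x - c%:E <= f' x by rewrite /f' le_max lexx.
apply: (@le_trans _ _ (\int[P]_x (f' x + c%:E))).
  apply: ge0_le_integral => //; first exact: emeasurable_funD.
  by move=> x _; rewrite -leeBlDr // fcf'.
rewrite ge0_integralD //.
rewrite integral_cst //; set PT := (X in c%:E * X).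
rewrite (_ : PT = 1) ?mule1 ?leeD2r //; last exact: probability_setT.
apply: ge0_le_integral_nonmeasurable => // x.
by rewrite ge_max g0 andbT leeBlDr.
Qed.

Lemma integral_sum_indic (mu : {measure set T -> \bar R}) (A : nat -> set T) n :
  (forall i, measurable (A i)) ->
  \int[mu]_x (\sum_(i < n) \1_(A i) x)%:E = \sum_(i < n) mu (A i).
Proof.
move=> mA; under eq_integral do rewrite -sumEFin.
rewrite ge0_integral_sum //.
- by apply: eq_bigr => i _; rewrite integral_indic ?setIT.
- by move=> i; apply/measurable_EFinP; exact: measurable_indic.
Qed.

Lemma abse_measureB_le (mu : {finite_measure set T -> \bar R}) (A B : set T)
    (c : \bar R) :
  measurable A -> measurable B ->
  mu (A `\` B) <= c -> mu (B `\` A) <= c -> `|mu A - mu B| <= c.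
Proof.
move=> mA mB.
have muA : mu A = mu (A `\` B) + mu (A `&` B) by exact: measureDI.
have muB : mu B = mu (B `\` A) + mu (A `&` B) by rewrite setIC; exact: measureDI.
have real_mu C : measurable C -> mu C = (fine (mu C))%:E.
  by move=> mC; rewrite fineK // fin_num_measure.
have : 0 <= mu (A `\` B) by exact: measure_ge0.
have : 0 <= mu (B `\` A) by exact: measure_ge0.
rewrite muA muB (real_mu _ (measurableD mA mB)) (real_mu _ (measurableD mB mA)).
rewrite (real_mu _ (measurableI _ _ mA mB)).
case: c => [r| |] /=; rewrite ?leey ?leeNy_eq // !lee_fin => ? ? ? ?.
by rewrite ler_norml; apply/andP; split; lra.
Qed.
End integral_bounds.
Section bounded_density.
Context d (T : measurableType d) (R : realType) (P : probability T R)
  (X : T -> R) (V : R -> R) (M : R).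
Hypothesis mV : measurable_fun setT V.
Hypothesis XV : forall A, measurable A ->
  P (X @^-1` A) = (\int[lebesgue_measure]_(x in A) (V x)%:E)%E.
Hypothesis VM : {ae lebesgue_measure, forall x, V x <= M}.

Lemma probability_preimage_le A : measurable A ->
  (P (X @^-1` A) <= (Num.max M 0)%:E * lebesgue_measure A)%E.
Proof.
move=> mA; rewrite XV // integralE.
have mVA : measurable_fun A (EFin \o V).
  by apply/measurable_EFinP; exact: measurable_funS mV.
apply: (@le_trans _ _ (\int[lebesgue_measure]_(x in A) (EFin \o V)^\+ x)%E).
  by rewrite -[leRHS]sube0 leeB // integral_ge0.
rewrite -integral_cst //; apply: ae_ge0_le_integral => //.
- exact: measurable_funepos.
- by move=> x _; rewrite lee_fin le_max lexx orbT.
- apply: negligibleS VM => x /= nle VMx; apply: nle => Ax.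
  by rewrite funeposE /= /maxe /=; case: ifP; rewrite lee_fin le_max ?VMx ?lexx ?orbT.
Qed.

Lemma density_bound_ge0 : 0 <= M.
Proof.
rewrite leNgt; apply/negP => M0.
have := probability_preimage_le measurableT.
by rewrite preimage_setT probability_setT (max_r (ltW M0)) mul0e lee_fin ler10.
Qed.

Lemma probability_preimage_itv_le (a h : R) : 0 < h ->
  (P (X @^-1` `]a, (a + h)%R]%classic) <= (M * h)%:E)%E.
Proof.
move=> h0; apply: le_trans (probability_preimage_le (measurable_itv _)) _.
rewrite max_l ?density_bound_ge0 // lebesgue_measure_itv /= lte_fin ltrDl h0.
by rewrite -EFinB -EFinM addrAC subrr add0r.
Qed.
End bounded_density.
Section ruin_difference.
Context d (T : measurableType d) (R : realType) (P : probability T R)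
  (X : T -> R) (Y1 Y2 : R -> T -> R) (t M : R).
Hypothesis t0 : 0 <= t.
Hypothesis M0 : 0 <= M.
Hypothesis mX : measurable_fun setT X.
Hypothesis PXitv : forall a h : R, 0 < h ->
  (P (X @^-1` `]a, (a + h)%R]%classic) <= (M * h)%:E)%E.
Hypothesis mgap : forall a h : R, measurable (dip_gap Y1 Y2 t a h).
Hypothesis indep_gap : forall (A : set R) (a h : R), measurable A ->
  P (X @^-1` A `&` dip_gap Y1 Y2 t a h) = (P (X @^-1` A) * P (dip_gap Y1 Y2 t a h))%E.
Hypothesis mruin : measurable (ruin X Y1 t `\` ruin X Y2 t).

Let Z := sup_dist Y1 Y2 t.

Lemma sum_probability_dip_gap_le (b h : R) n : 0 < h ->
  (h%:E * \sum_(i < n) P (dip_gap Y1 Y2 t (b + i%:R * h) h)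
     <= \int[P]_w Z w + (2 * h)%:E)%E.
Proof.
move=> h0; pose G i := dip_gap Y1 Y2 t (b + i%:R * h) h.
rewrite -(@integral_sum_indic _ _ _ P G) // => [|i]; last exact: mgap.
have mS : measurable_fun setT (fun w => \sum_(i < n) \1_(G i) w : R).
  by apply: measurable_sum => i; exact/measurable_indic/mgap.
have S0 w : 0 <= \sum_(i < n) \1_(G i) w :> R.
  by rewrite sumr_ge0 // => i _; rewrite indicE.
have h0' := ltW h0.
rewrite -ge0_integralZl_EFin //;
  [|by move=> w _; rewrite lee_fin|exact/measurable_EFinP].
under eq_integral do rewrite -EFinM.
apply: ge0_le_integral_addr_nonmeasurable.
- exact/measurable_EFinP/measurable_funM.
- by move=> w; rewrite lee_fin mulr_ge0.
- by move=> w; apply: sup_dist_ge0.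
- by rewrite mulr_ge0.
- by move=> w; apply: sum_dip_gap_le.
Qed.

Lemma probability_ruin_diff_window_le (b h : R) n : 0 < h ->
  (P ((ruin X Y1 t `\` ruin X Y2 t) `&` X @^-1` `]b, (b + n%:R * h)%R]%classic)
     <= M%:E * (\int[P]_w Z w + (2 * h)%:E))%E.
Proof.
move=> h0; pose a i := b + i%:R * h.
have mXitv (c e : R) : measurable (X @^-1` `]c, e]%classic).
  by rewrite -[X @^-1` _]setTI; exact: mX.
pose F i := X @^-1` `]a i, (a i + h)%R]%classic `&` dip_gap Y1 Y2 t (a i) h.
apply: (@le_trans _ _ (\sum_(i < n) P (F i))%E).
  apply: content_subadditive => [i _||]; first exact: measurableI.
    exact: measurableI.
  by rewrite -bigcup_mkord; exact: ruin_diff_sub_cells.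
apply: (@le_trans _ _ (\sum_(i < n) (M * h)%:E * P (dip_gap Y1 Y2 t (a i) h))%E).
  apply: lee_sum => i _; rewrite indep_gap //.
  by apply: lee_wpmul2r => //; exact: PXitv.
rewrite -ge0_sume_distrr // EFinM -muleA.
by apply: lee_wpmul2l; rewrite ?lee_fin //; exact: sum_probability_dip_gap_le.
Qed.

Lemma probability_ruin_diff_le_width (h : R) : 0 < h ->
  (P (ruin X Y1 t `\` ruin X Y2 t) <= M%:E * (\int[P]_w Z w + (2 * h)%:E))%E.
Proof.
move=> h0; set E := ruin X Y1 t `\` ruin X Y2 t.
pose B m := E `&` X @^-1` `]- (m%:R * h), (m%:R * h)%R]%classic.
have mB m : measurable (B m).
  by apply: measurableI => //; rewrite -[X @^-1` _]setTI; exact: mX.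
have EB : \bigcup_m B m = E.
  apply/seteqP; split => [w [m _ []]//|w Ew].
  have := archi_boundP (divr_ge0 (normr_ge0 (X w)) (ltW h0)).
  rewrite ltr_pdivrMr // => Xbound.
  exists (Num.bound (`|X w| / h)) => //; split => //=; rewrite in_itv /=.
  by move: Xbound; rewrite ltr_norml => /andP[-> /ltW].
have ndB : nondecreasing_seq B.
  move=> m k mk; apply/subsetPset => w [Ew]; rewrite /= !in_itv /= => /andP[lo hi].
  have : m%:R * h <= k%:R * h by rewrite ler_pM2r // ler_nat.
  by split => //=; rewrite in_itv /=; apply/andP; split; lra.
have := @nondecreasing_cvg_mu _ _ _ P _ mB; rewrite EB => /(_ mruin ndB) cvgB.
rewrite -(cvg_lim _ cvgB) //; apply: lime_le; first by apply/cvg_ex; exists (P E).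
apply: nearW => m /=.
have := probability_ruin_diff_window_le (- (m%:R * h)) (2 * m) h0.
by rewrite (_ : - (m%:R * h) + (2 * m)%:R * h = m%:R * h) // natrM; lra.
Qed.

Lemma probability_ruin_diff_le :
  (P (ruin X Y1 t `\` ruin X Y2 t) <= M%:E * \int[P]_w Z w)%E.
Proof.
have Z0 : (0 <= \int[P]_w Z w)%E by apply: integral_ge0 => w _; exact: sup_dist_ge0.
apply/lee_addgt0Pr => e e0; set h := e / (2 * M + 1).
have h0 : 0 < h by rewrite divr_gt0 // ltr_wpDl // mulr_ge0.
apply: le_trans (probability_ruin_diff_le_width h0) _.
have h0' := ltW h0.
rewrite ge0_muleDr //; last by rewrite lee_fin mulr_ge0.
apply: leeD => //.
rewrite -EFinM lee_fin /h !mulrA ler_pdivrMr ?ltr_wpDl ?mulr_ge0 //; nra.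
Qed.

End ruin_difference.
Section path_sigma_algebra.
Context d (T : measurableType d) (R : realType) (Y1 Y2 : R -> T -> R).

Lemma gen_sigma_pairC : gen_sigma_pair Y1 Y2 = gen_sigma_pair Y2 Y1.
Proof.
congr (<<s _ >>); apply/seteqP; split=> E [s [B [s0 mB YB]]];
  by exists s, B; split => //; case: YB; [right|left].
Qed.

Lemma gen_sigma_pair_dip_gap t a h :
  (forall w s, 0 <= s -> Y1 x w @[x --> at_right s] --> Y1 s w) ->
  (forall w s, 0 <= s -> Y2 x w @[x --> at_right s] --> Y2 s w) ->
  0 <= t -> gen_sigma_pair Y1 Y2 (dip_gap Y1 Y2 t a h).
Proof.
move=> Y1r Y2r t0.
pose GT := g_sigma_algebraType [set E : set T | exists s : R, exists B : set R,
  [/\ 0 <= s, measurable B & (E = Y1 s @^-1` B \/ E = Y2 s @^-1` B)]].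
have mY (Y : R -> T -> R) : Y = Y1 \/ Y = Y2 ->
    forall s, 0 <= s -> measurable_fun (setT : set GT) (Y s).
  move=> Y12 s s0 _ B mB; rewrite setTI; apply: sub_sigma_algebra.
  by exists s, B; split => //; case: Y12 => ->; [left|right].
apply: (@measurableD _ GT); apply: (@measurable_hits_below _ _ GT) => //.
- exact: mY (or_introl erefl).
- exact: mY (or_intror erefl).
Qed.

End path_sigma_algebra.
Theorem lemma3p10 (d : measure_display) (T : measurableType d) (R : realType)
  (P : probability T R) (X : T -> R) (V : R -> R) (M : R)
  (Y1 Y2 : R -> T -> R) (t : R) :
  measurable_fun setT X ->
  measurable_fun setT V ->
  (forall A, measurable A ->
     P (X @^-1` A) = (\int[lebesgue_measure]_(x in A) (V x)%:E)%E) ->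
  {ae lebesgue_measure, forall x, V x <= M} ->
  (forall s, 0 <= s -> measurable_fun setT (Y1 s)) ->
  (forall s, 0 <= s -> measurable_fun setT (Y2 s)) ->
  (forall w, cadlag (fun s => Y1 s w)) ->
  (forall w, cadlag (fun s => Y2 s w)) ->
  indep_rv_sigma P X (gen_sigma_pair Y1 Y2) ->
  0 <= t ->
  (`| P [set w | (ereal_inf [set (X w + Y1 s w)%:E | s in `[0%R, t]%classic] <= 0)%E]
      - P [set w | (ereal_inf [set (X w + Y2 s w)%:E | s in `[0%R, t]%classic] <= 0)%E] |
   <= M%:E * \int[P]_w ereal_sup [set `|Y1 s w - Y2 s w|%:E | s in `[0%R, t]%classic])%E.
Proof.
move=> mX mV XV VM mY1 mY2 cY1 cY2 indep t0.
have Y1r w s : 0 <= s -> Y1 x w @[x --> at_right s] --> Y1 s w := (cY1 w).1 s.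
have Y2r w s : 0 <= s -> Y2 x w @[x --> at_right s] --> Y2 s w := (cY2 w).1 s.
have mE1 := measurable_ruin mX mY1 Y1r t0.
have mE2 := measurable_ruin mX mY2 Y2r t0.
have M0 := density_bound_ge0 mV XV VM.
have PXitv := probability_preimage_itv_le mV XV VM.
change (`|P (ruin X Y1 t) - P (ruin X Y2 t)|
  <= M%:E * \int[P]_w sup_dist Y1 Y2 t w)%E.
apply: abse_measureB_le => //.
- apply: probability_ruin_diff_le => //.
  + by move=> a h; apply: measurableD; exact: measurable_hits_below.
  + by move=> A a h mA; apply: indep => //; exact: gen_sigma_pair_dip_gap.
  + exact: measurableD.
- rewrite sup_distC; apply: probability_ruin_diff_le => //.
  + by move=> a h; apply: measurableD; exact: measurable_hits_below.
  + move=> A a h mA; apply: indep => //.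
    by rewrite gen_sigma_pairC; exact: gen_sigma_pair_dip_gap.
  + exact: measurableD.
Qed.
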